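(* Let $|\cdot|:\mathbb{Q}\to R$ be a non-archimedean multiplicative generalized seminorm on $\mathbb{Q}$ with trivial kernel. Then $|\cdot|$ is equivalent either to the $p$-adic valuation $|\cdot|_p:\mathbb{Q}\to R_{p^{\mathbb{Z}}}$ for some prime number $p$, or to the trivial valuation $|\cdot|_0:\mathbb{Q}\to\{0,1\}$.
   Context: A halo is a commutative unital semiring with a partial order compatible with $+$ and $\cdot$; an aura is a halo whose semiring is a semifield; positive means $0<1$. A generalized seminorm on a ring $A$ is a map $|\cdot|:A\to R$ into a positive totally ordered aura with $|0|=0,|1|=1$, $|a+b|\le|a|+|b|$, $|ab|\le|a||b|$; multiplicative if $|ab|=|a||b|$; non-archimedean if $|a+b|\le\max(|a|,|b|)$. Two seminorms $|\cdot|_1,|\cdot|_2$ on $A$ are equivalent if for all $a,b\in A$: $|a|_1\le|b|_1\iff|a|_2\le|b|_2$. For a totally ordered multiplicative group $\Gamma$, $R_\Gamma=\{0\}\cup\Gamma$ with $0$ smallest and absorbing and addition $\max$. $R_{p^{\mathbb{Z}}}$ uses $\Gamma=p^{\mathbb{Z}}\subset\mathbb{Q}_{>0}$ with its usual order, $|x|_p=p^{-\mathrm{ord}_p(x)}$ for $x\neq0$; $\{0,1\}=R_{\{1\}}$ and $|x|_0=1$ for $x\neq0$, $|0|_0=0$. *)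

From HB Require Import structures.
From mathcomp Require Import all_boot all_order all_algebra.
Set Implicit Arguments. Unset Strict Implicit. Unset Printing Implicit Defensive.
Import Order.TTheory GRing.Theory Num.Theory.
Local Open Scope ring_scope.

Definition halo_order (R : comNzSemiRingType) (le : rel R) : Prop :=
  [/\ (forall x, le x x),
      (forall x y, le x y -> le y x -> x = y),
      (forall x y z, le x y -> le y z -> le x z),
      (forall x y z, le x y -> le (x + z) (y + z)) &
      (forall x y z, le x y -> le (x * z) (y * z))].

Definition is_semifield (R : comNzSemiRingType) : Prop :=
  forall x : R, x != 0 -> exists y : R, x * y = 1.

Definition pos_tot_aura (R : comNzSemiRingType) (le : rel R) : Prop :=
  [/\ halo_order le, is_semifield R,
      (le 0 1 /\ (0 : R) != 1) &
      (forall x y, le x y \/ le y x)].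

Definition maxR (R : Type) (le : rel R) (x y : R) : R := if le x y then y else x.

Definition gen_seminorm (R : comNzSemiRingType) (le : rel R) (f : rat -> R) : Prop :=
  [/\ f 0 = 0, f 1 = 1,
      (forall a b, le (f (a + b)) (f a + f b)) &
      (forall a b, le (f (a * b)) (f a * f b))].

Definition sn_multiplicative (R : comNzSemiRingType) (f : rat -> R) : Prop :=
  forall a b, f (a * b) = f a * f b.

Definition non_archimedean (R : comNzSemiRingType) (le : rel R) (f : rat -> R) : Prop :=
  forall a b, le (f (a + b)) (maxR le (f a) (f b)).

Definition seminorm_equiv (R1 R2 : Type) (le1 : rel R1) (le2 : rel R2)
  (f1 : rat -> R1) (f2 : rat -> R2) : Prop :=
  forall a b : rat, le1 (f1 a) (f1 b) <-> le2 (f2 a) (f2 b).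

(* p-adic absolute value |x|_p = p^{-ord_p x}, with values in
   R_{p^Z} = {0} ∪ p^Z, realised inside rat (same order as R_{p^Z}). *)
Definition ord_p (p : nat) (x : rat) : int :=
  (logn p `|numq x|)%:Z - (logn p `|denq x|)%:Z.

Definition padic_abs (p : nat) (x : rat) : rat :=
  if x == 0 then 0 else (p%:R : rat) ^ (- ord_p p x).

(* trivial valuation |x|_0 with values in {0,1} (realised in rat, 0 < 1) *)
Definition triv_abs (x : rat) : rat := if x == 0 then 0 else 1.

From mathcomp Require Import all_boot all_order all_algebra.
From mathcomp Require Import zify.
From Stdlib Require Import Classical.
Import Order.TTheory GRing.Theory Num.Theory.
Local Open Scope ring_scope.
Set Implicit Arguments. Unset Strict Implicit.

(* Multiplicativity and the ultrametric inequality force |n| <= 1 for every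
   natural n.  If |n| = 1 for all n > 0, then |.| is trivial.  Otherwise the
   least n with |n| < 1 is a prime p (a proper factorisation would write it as a
   product of norm-1 factors), and every n prime to p has |n| = 1, since a Bezout
   relation 1 = k p - a n together with the ultrametric inequality would give
   |1| < 1.  Hence |x| = c ^ ord_p(x) with c = |p| < 1, and comparing powers of c
   is comparing p-adic orders in reverse. *)

Lemma maxR_cases (T : Type) (le : rel T) (x y : T) :
  maxR le x y = x \/ maxR le x y = y.
Proof. by rewrite /maxR; case: ifP; [right | left]. Qed.

Section PosTotAura.
Variables (R : comNzSemiRingType) (le : rel R).
Hypothesis HR : pos_tot_aura le.

Lemma aura_le_refl x : le x x.
Proof. by case: HR => -[le_refl _ _ _ _] _ _ _; apply: le_refl. Qed.

Lemma aura_le_anti x y : le x y -> le y x -> x = y.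
Proof. by case: HR => -[_ le_anti _ _ _] _ _ _; apply: le_anti. Qed.

Lemma aura_le_trans x y z : le x y -> le y z -> le x z.
Proof. by case: HR => -[_ _ le_trans _ _] _ _ _; apply: le_trans. Qed.

Lemma aura_le_total x y : le x y \/ le y x.
Proof. by case: HR => _ _ _ le_total; apply: le_total. Qed.

Lemma aura_ler_wM2r x y z : le x y -> le (x * z) (y * z).
Proof. by case: HR => -[_ _ _ _ le_mul] _ _ _; apply: le_mul. Qed.

Lemma aura_ler_wM2l x y z : le x y -> le (z * x) (z * y).
Proof. by rewrite ![z * _]mulrC; apply: aura_ler_wM2r. Qed.

Lemma aura_le01 : le 0 1.
Proof. by case: HR => _ _ []. Qed.

Lemma aura_le0x x : le 0 x.
Proof. by have := aura_ler_wM2r x aura_le01; rewrite mul0r mul1r. Qed.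

Lemma aura_ler_pM2r x y z : z != 0 -> le (x * z) (y * z) <-> le x y.
Proof.
case: HR => _ semifield _ _ /semifield[w zw]; split; last exact: aura_ler_wM2r.
by move/(aura_ler_wM2r w); rewrite -!mulrA zw !mulr1.
Qed.

Lemma aura_mulf_neq0 (x y : R) : x != 0 -> y != 0 -> x * y != 0.
Proof.
case: HR => _ semifield _ _ x0 /semifield[w yw]; apply: contraNneq x0 => xy0.
by rewrite -(mulr1 x) -yw mulrA xy0 mul0r.
Qed.

Lemma aura_expf_neq0 (x : R) n : x != 0 -> x ^+ n != 0.
Proof.
move=> x0; elim: n => [|n IHn]; last by rewrite exprS aura_mulf_neq0.
by case: HR => _ _ [_]; rewrite expr0 eq_sym.
Qed.

Lemma aura_sqr_eq1 (x : R) : x * x = 1 -> x = 1.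
Proof.
move=> xx1; have [x_le1|x_ge1] := aura_le_total x 1.
- by apply: (aura_le_anti x_le1); have := aura_ler_wM2r x x_le1; rewrite xx1 mul1r.
- by apply: (aura_le_anti _ x_ge1); have := aura_ler_wM2r x x_ge1; rewrite xx1 mul1r.
Qed.

Lemma aura_mul_le1 x y : le x 1 -> le y 1 -> le (x * y) 1.
Proof. by move=> x1; apply: aura_le_trans; have := aura_ler_wM2r y x1; rewrite mul1r. Qed.

Lemma aura_mul_lt1 x y : le x 1 -> ~ le 1 y -> ~ le 1 (x * y).
Proof.
move=> x1 y_lt1 xy_ge1; apply: y_lt1; apply: aura_le_trans xy_ge1 _.
by have := aura_ler_wM2r y x1; rewrite mul1r.
Qed.

Lemma aura_exp_le1 x n : le x 1 -> le (x ^+ n) 1.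
Proof.
move=> x1; elim: n => [|n IHn]; first exact: aura_le_refl.
by rewrite exprS aura_mul_le1.
Qed.

Lemma aura_le_exp2l_lt1 (c : R) m n :
  c != 0 -> le c 1 -> ~ le 1 c -> le (c ^+ m) (c ^+ n) <-> (n <= m)%N.
Proof.
move=> c0 c_le1 c_lt1; split; last first.
  move=> nm; rewrite -(subnKC nm) exprD -{2}(mulr1 (c ^+ n)).
  by apply: aura_ler_wM2l; apply: aura_exp_le1.
apply: contraPleq => mn.
rewrite -(subnKC (ltnW mn)) exprD -{1}(mulr1 (c ^+ m)) ![c ^+ m * _]mulrC.
have -> : (n - m = (n - m).-1.+1)%N by lia.
rewrite aura_ler_pM2r ?aura_expf_neq0 //.
by rewrite exprSr; apply: aura_mul_lt1 => //; apply: aura_exp_le1.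
Qed.

End PosTotAura.

Lemma ord_p_leE p (a b : rat) : (ord_p p b <= ord_p p a) =
  (logn p `|numq b| + logn p `|denq a| <= logn p `|numq a| + logn p `|denq b|)%N.
Proof. by rewrite /ord_p; apply/idP/idP; lia. Qed.

Section RatSeminorm.
Variables (R : comNzSemiRingType) (le : rel R) (f : rat -> R).
Hypotheses (HR : pos_tot_aura le) (f0 : f 0 = 0) (f1 : f 1 = 1).
Hypotheses (fM : sn_multiplicative f) (f_ultra : non_archimedean le f).
Hypothesis f_ker : forall x, f x = 0 -> x = 0.

Lemma norm_neq0 x : x != 0 -> f x != 0.
Proof. by apply: contra_neq => /f_ker. Qed.

Lemma normN x : f (- x) = f x.
Proof.
have fN1 : f (-1) = 1 by apply: (aura_sqr_eq1 HR); rewrite -fM mulrNN mulr1.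
by rewrite -mulN1r fM fN1 mul1r.
Qed.

Lemma norm_nat_le1 n : le (f n%:R) 1.
Proof.
elim: n => [|n IHn]; first by rewrite f0 (aura_le01 HR).
rewrite -addn1 natrD; apply: (aura_le_trans HR (f_ultra _ _)).
by case: (maxR_cases le (f n%:R) (f 1)) => ->; rewrite // f1 aura_le_refl.
Qed.

Lemma norm_nat_eq1 n : le 1 (f n%:R) -> f n%:R = 1.
Proof. exact: (aura_le_anti HR (norm_nat_le1 n)). Qed.

Lemma norm_numq_denq x : f x * f `|denq x|%:R = f `|numq x|%:R.
Proof.
have norm_int (z : int) : f z%:~R = f `|z|%:R by case: z => n //=; rewrite normN.
by rewrite -norm_int -fM -norm_int numqE.
Qed.

Lemma seminorm_equiv_of_neq0 (g : rat -> rat) :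
  g 0 = 0 -> (forall x : rat, x != 0 -> 0 < g x) ->
  (forall a b : rat, a != 0 -> b != 0 -> le (f a) (f b) <-> g a <= g b) ->
  seminorm_equiv le (fun x y : rat => x <= y) f g.
Proof.
move=> g0 g_gt0 fg a b.
have [->|a0] := eqVneq a 0.
  rewrite f0 g0 (aura_le0x HR); split=> // _.
  by have [->|/g_gt0/ltW //] := eqVneq b 0; rewrite g0.
have [->|b0] := eqVneq b 0; last exact: fg.
rewrite f0 g0; split=> [fa0|]; last by rewrite leNgt g_gt0.
by move: (norm_neq0 a0); rewrite (aura_le_anti HR fa0 (aura_le0x HR _)) eqxx.
Qed.

Lemma seminorm_equiv_triv :
  (forall n, (0 < n)%N -> f n%:R = 1) ->
  seminorm_equiv le (fun x y : rat => x <= y) f triv_abs.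
Proof.
move=> f_nat; have f_eq1 x : x != 0 -> f x = 1.
  move=> x0; have := norm_numq_denq x.
  by rewrite !f_nat ?mulr1 // absz_gt0 ?numq_eq0 ?denq_eq0.
apply: seminorm_equiv_of_neq0 => [|x x0|a b a0 b0]; rewrite /triv_abs ?eqxx //.
  by rewrite (negbTE x0).
by rewrite (negbTE a0) (negbTE b0) !f_eq1 //; split=> // _; apply: aura_le_refl.
Qed.

Section LeastSmallNat.
Variable p : nat.
Hypotheses (p_gt0 : (0 < p)%N) (fp_lt1 : ~ le 1 (f p%:R)).
Hypothesis f_small : forall m, (0 < m)%N -> (m < p)%N -> f m%:R = 1.

Lemma least_small_nat_prime : prime p.
Proof.
have p_gt1 : (1 < p)%N.
  move: p_gt0 fp_lt1; case: (p) => [|[|]] //= _.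
  by rewrite f1 => /(_ (aura_le_refl HR 1)).
apply/primeP; split=> // d dvd_dp; apply/negPn/negP => /norP[d_neq1 d_neqp].
have d_gt0 : (0 < d)%N by apply: dvdn_gt0 dvd_dp.
have d_ltp : (d < p)%N by rewrite ltn_neqAle d_neqp dvdn_leq.
have e_ltp : (p %/ d < p)%N by rewrite ltn_Pdiv // ltn_neqAle eq_sym d_neq1.
have e_gt0 : (0 < p %/ d)%N by rewrite divn_gt0 // ltnW.
apply: fp_lt1; rewrite -(divnK dvd_dp) natrM fM !f_small // mulr1.
exact: aura_le_refl.
Qed.

Lemma norm_nat_coprime n : ~~ (p %| n)%N -> f n%:R = 1.
Proof.
move=> pNn; apply: norm_nat_eq1; apply/negPn/negP => /negP fn_lt1.
have p_pr := least_small_nat_prime.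
have [a _] := Bezoutl n (prime_gt0 p_pr).
have /eqP -> : coprime p n by rewrite prime_coprime.
move=> /divnK; set k := (_ %/ p)%N => kp_eq.
have one_eq : (1 : rat) = (k * p)%:R + - (a * n)%:R by rewrite kp_eq natrD addrK.
have := f_ultra (k * p)%:R (- (a * n)%:R).
rewrite -one_eq f1 normN !natrM !fM => /(aura_le_trans HR (aura_le_refl HR 1)).
case: (maxR_cases le (f k%:R * f p%:R) (f a%:R * f n%:R)) => ->;
  by apply: (aura_mul_lt1 HR) => //; apply: norm_nat_le1.
Qed.

Lemma norm_nat_logn n : (0 < n)%N -> f n%:R = f p%:R ^+ logn p n.
Proof.
have p_pr := least_small_nat_prime.
elim/ltn_ind: n => n IHn n_gt0.
rewrite lognE p_pr n_gt0 /=; case: ifP => [dvd_pn|/negbT/norm_nat_coprime //].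
have q_gt0 : (0 < n %/ p)%N by rewrite divn_gt0 ?prime_gt0 // dvdn_leq.
have q_lt := ltn_Pdiv (prime_gt1 p_pr) n_gt0.
by rewrite -{1}(divnK dvd_pn) natrM fM IHn // exprSr.
Qed.

Lemma norm_le_ord_p (a b : rat) :
  a != 0 -> b != 0 -> le (f a) (f b) <-> ord_p p b <= ord_p p a.
Proof.
have p_pr := least_small_nat_prime; set c := f p%:R.
have c0 : c != 0 by apply: norm_neq0; rewrite pnatr_eq0 -lt0n prime_gt0.
have norm_logn x : x != 0 -> f x * c ^+ logn p `|denq x| = c ^+ logn p `|numq x|.
  by move=> x0; rewrite -!norm_nat_logn ?norm_numq_denq // absz_gt0 ?numq_eq0 ?denq_eq0.
move=> a0 b0; rewrite ord_p_leE -(aura_le_exp2l_lt1 HR _ _ c0 (norm_nat_le1 p) fp_lt1).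
rewrite !exprD.
rewrite -(norm_logn a a0) -(norm_logn b b0) -!mulrA [X in le _ (_ * X)]mulrC.
have cc0 := aura_mulf_neq0 HR (aura_expf_neq0 HR _ c0) (aura_expf_neq0 HR _ c0).
by symmetry; apply: (aura_ler_pM2r HR _ _ (cc0 _ _)).
Qed.

End LeastSmallNat.

End RatSeminorm.

Lemma padic_abs_gt0 p (x : rat) : (0 < p)%N -> x != 0 -> 0 < padic_abs p x.
Proof. by move=> p_gt0 x0; rewrite /padic_abs (negbTE x0) exprz_gt0 ?ltr0n. Qed.

Lemma padic_abs_le p (a b : rat) : (1 < p)%N -> a != 0 -> b != 0 ->
  (padic_abs p a <= padic_abs p b) = (ord_p p b <= ord_p p a).
Proof.
move=> p_gt1 a0 b0; rewrite /padic_abs (negbTE a0) (negbTE b0).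
by rewrite ler_eXz2l ?ltr1n // lerN2.
Qed.

Unset Implicit Arguments. Set Strict Implicit.

Theorem lemma3p9 (R : comNzSemiRingType) (le : rel R) (HR : pos_tot_aura le)
  (f : rat -> R) (Hsn : gen_seminorm le f) (Hmul : sn_multiplicative f)
  (Hna : non_archimedean le f) (Hker : forall x : rat, f x = 0 -> x = 0) :
  (exists p : nat, prime p /\
     seminorm_equiv le (fun x y : rat => x <= y) f (padic_abs p))
  \/ seminorm_equiv le (fun x y : rat => x <= y) f triv_abs.
Proof.
case: Hsn => f0 f1 _ _; have norm_eq1 := norm_nat_eq1 HR f0 f1 Hna.
have [small|no_small] :=
  classic (exists n, (0 < n)%N && ~~ le 1 (f n%:R)); last first.
  right; apply: (seminorm_equiv_triv HR f0 f1 Hmul Hker) => n n_gt0.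
  apply: norm_eq1; apply/negPn/negP => fn_lt1.
  by apply: no_small; exists n; rewrite n_gt0.
left; have [p /andP[p_gt0 /negP fp_lt1] p_min] := ex_minnP small.
have f_small m : (0 < m)%N -> (m < p)%N -> f m%:R = 1.
  move=> m_gt0 m_ltp; apply: norm_eq1; apply/negPn/negP => fm_lt1.
  by have := p_min m; rewrite m_gt0 fm_lt1 leqNgt m_ltp => /(_ isT).
have p_pr := least_small_nat_prime HR f1 Hmul p_gt0 fp_lt1 f_small.
exists p; split=> //; apply: (seminorm_equiv_of_neq0 HR f0 Hker).
- by rewrite /padic_abs eqxx.
- by move=> x; apply: padic_abs_gt0; apply: prime_gt0.
- move=> a b a0 b0; rewrite padic_abs_le ?prime_gt1 //.
  exact: (norm_le_ord_p HR f0 f1 Hmul Hna Hker p_gt0 fp_lt1 f_small).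
Qed.
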